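(* For every prime power $k$, there exists a hypergraph $\widehat{\mathcal{A}_k}=(V,E)$ (obtained from the field plane $\mathcal{A}_k$ by deleting $k-1$ pairwise parallel lines) which is linear and $k$-uniform with $|V|=k^2$, $|E|=k^2+1$, having a hyperedge $e_0$ with $\mathrm{deg}(x)=k+1$ for all $x\in e_0$ and $\mathrm{deg}(x)\ge k$ for all $x\in V\smallsetminus e_0$, and such that: (i) $\mathrm{q}(\widehat{\mathcal{A}_k})=k+1$; (ii) $\widehat{\mathcal{A}_k}$ is not maximal for inclusion among linear $k$-uniform hypergraphs on the same $k^2$ vertices (some hyperedge can be added preserving linearity and $k$-uniformity); (iii) $\widehat{\mathcal{A}_k}$ has exactly one critical hyperedge, namely the unique hyperedge $e_0$ with the degree properties above.
   Context: For a prime power $k$, the field plane $\mathcal{A}_k$ is the hypergraph with vertex set $\mathbb{F}_k^2$ whose hyperedges are the $k^2+k$ affine lines of $\mathbb{F}_k^2$. A hypergraph $(V,E)$ is linear if distinct hyperedges share at most one vertex, $k$-uniform if every hyperedge has $k$ elements; $\mathrm{deg}(x)$ is the number of hyperedges containing $x$. The chromatic index $\mathrm{q}$ is the least number of colors in a coloring of hyperedges where distinct intersecting hyperedges get different colors. A hyperedge $e$ is critical if $\mathrm{q}((V,E\smallsetminus\{e\}))=\mathrm{q}((V,E))-1$. *)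

From mathcomp Require Import all_boot all_order all_algebra all_field.
Set Implicit Arguments. Unset Strict Implicit. Unset Printing Implicit Defensive.
Import GRing.Theory.
Local Open Scope ring_scope.

Definition prime_power (k : nat) : Prop :=
  exists p n : nat, prime p /\ (0 < n)%N /\ k = (p ^ n)%N.

Section Hypergraphs.
Variable T : finType.

(* A hypergraph on vertex set T is given by its set of hyperedges E. *)
Definition linear_hg (E : {set {set T}}) : Prop :=
  forall e f, e \in E -> f \in E -> e != f -> (#|e :&: f| <= 1)%N.

Definition uniform_hg (k : nat) (E : {set {set T}}) : Prop :=
  forall e, e \in E -> #|e| = k.

Definition hdeg (E : {set {set T}}) (x : T) : nat := #|[set e in E | x \in e]|.

Definition colorable (E : {set {set T}}) (n : nat) : bool :=
  [exists c : {ffun {set T} -> 'I_n},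
     [forall e in E, forall f in E,
        ((e != f) && (e :&: f != set0)) ==> (c e != c f)]].

Lemma colorable_exists (E : {set {set T}}) : exists n, colorable E n.
Proof.
exists #|{set T}|; apply/existsP; exists [ffun e => enum_rank e].
apply/forall_inP => e _; apply/forall_inP => f _; apply/implyP => /andP[nef _].
by rewrite !ffunE; apply: contra nef => /eqP /enum_rank_inj ->.
Qed.

Definition chromatic_index (E : {set {set T}}) : nat :=
  ex_minn (colorable_exists E).

Definition critical (E : {set {set T}}) (e : {set T}) : Prop :=
  e \in E /\ chromatic_index (E :\ e) = (chromatic_index E).-1.

End Hypergraphs.

Section FieldPlane.
Variable F : finFieldType.

Definition aline (a b c : F) : {set F * F} :=
  [set p : F * F | a * p.1 + b * p.2 == c].

Definition field_plane : {set {set F * F}} :=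
  [set aline t.1.1 t.1.2 t.2 | t in [set t : F * F * F | t.1 != (0, 0)]].

Definition parallel (l m : {set F * F}) : bool := (l == m) || [disjoint l & m].

End FieldPlane.

(* Delete the vertical lines x = c, c <> 0: what remains is the line x = 0
   together with all k^2 lines y = m x + b.  Colouring the latter by their slope
   is proper, so k + 1 colours suffice, and k + 1 are needed at any point of
   x = 0.  Removing x = 0 brings the degree of (0, 0) down to k, which the slope
   colouring then matches; removing y = m x + b instead leaves the k + 1 lines
   through (0, b + 1), so x = 0 is the only critical edge. *)

From mathcomp Require Import all_boot all_order all_algebra all_field.
From mathcomp Require Import ring.
Set Implicit Arguments. Unset Strict Implicit. Unset Printing Implicit Defensive.
Import GRing.Theory.

Section HypergraphFacts.
Variable T : finType.
Implicit Types (E : {set {set T}}) (e : {set T}) (x : T) (n : nat).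

Lemma linear_hg_subset E E' : E' \subset E -> linear_hg E -> linear_hg E'.
Proof. by move=> /subsetP sE'E linE e f /sE'E eE /sE'E fE; apply: linE. Qed.

Lemma hdeg_setD1 E e x : hdeg E x = ((e \in E) && (x \in e)) + hdeg (E :\ e) x.
Proof.
rewrite /hdeg (cardsD1 e) inE; congr (_ + _).
by apply: eq_card => f; rewrite !inE andbA.
Qed.

Lemma colorableP E n :
  reflect (exists c : {set T} -> 'I_n,
             {in E &, forall e f, e != f -> e :&: f != set0 -> c e != c f})
          (colorable E n).
Proof.
apply: (iffP existsP) => [[c /forall_inP c_proper]|[c c_proper]].
  exists c => e f eE fE nef mef.
  by move/forall_inP/(_ f fE)/implyP: (c_proper e eE); apply; rewrite nef.
exists [ffun e => c e]; apply/forall_inP => e eE; apply/forall_inP => f fE.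
by apply/implyP => /andP[nef mef]; rewrite !ffunE; apply: c_proper.
Qed.

Lemma colorable_subset E E' n : E' \subset E -> colorable E n -> colorable E' n.
Proof.
move=> /subsetP sE'E /colorableP[c c_proper]; apply/colorableP; exists c.
by move=> e f /sE'E eE /sE'E fE; apply: c_proper.
Qed.

Lemma colorable_setD1 E e n : colorable (E :\ e) n -> colorable E n.+1.
Proof.
case/colorableP => c c_proper; apply/colorableP.
exists (fun f => if f == e then ord0 else lift ord0 (c f)) => f g fE gE nfg mfg.
have [fe|nfe] := eqVneq f e; have [ge|nge] := eqVneq g e.
- by rewrite fe ge eqxx in nfg.
- exact: neq_lift.
- by rewrite eq_sym neq_lift.
rewrite (inj_eq (@lift_inj _ ord0)); apply: c_proper => //; exact/setD1P.
Qed.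

Lemma hdeg_le_colorable E x n : colorable E n -> hdeg E x <= n.
Proof.
case/colorableP => c c_proper.
suff c_inj : {in [set e in E | x \in e] &, injective c}.
  rewrite /hdeg -(card_in_imset c_inj).
  by apply: leq_trans (max_card _) _; rewrite card_ord.
move=> e f /setIdP[eE xe] /setIdP[fE xf] cef; apply/eqP.
apply: contraTT (eqxx (c e)) => nef; rewrite {2}cef.
by apply: c_proper => //; apply/set0Pn; exists x; rewrite inE xe.
Qed.

Lemma chromatic_index_eq E x n :
  colorable E n -> hdeg E x = n -> chromatic_index E = n.
Proof.
move=> colE degx; rewrite /chromatic_index; case: ex_minnP => m colEm m_min.
by apply/eqP; rewrite eqn_leq m_min // -degx hdeg_le_colorable.
Qed.

End HypergraphFacts.

Section FieldPlaneLines.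
Variable F : finFieldType.
Local Open Scope ring_scope.
Implicit Types (a b c d m : F) (p q : F * F).

Definition vline c : {set F * F} := aline 1 0 c.
Definition sline m b : {set F * F} := aline (- m) 1 b.

Lemma in_vline c p : (p \in vline c) = (p.1 == c).
Proof. by rewrite inE mul1r mul0r addr0. Qed.

Lemma in_sline m b p : (p \in sline m b) = (p.2 == m * p.1 + b).
Proof. by rewrite inE mul1r mulNr addrC subr_eq addrC. Qed.

Lemma vline_inj : injective vline.
Proof.
move=> c d cd; have : (c, 0) \in vline d by rewrite -cd in_vline.
by rewrite in_vline => /eqP.
Qed.

Lemma sline_inj m b m' b' : sline m b = sline m' b' -> m = m' /\ b = b'.
Proof.
move=> eq_l.
have : (0, b) \in sline m' b' by rewrite -eq_l in_sline mulr0 add0r.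
rewrite in_sline mulr0 add0r => /eqP eq_b; subst b'.
have : (1, m + b) \in sline m' b by rewrite -eq_l in_sline mulr1.
by rewrite in_sline mulr1 => /eqP/addIr.
Qed.

Lemma vline_neq_sline c m b : vline c != sline m b.
Proof.
apply/eqP => eq_l.
have : (c, m * c + b + 1) \in sline m b by rewrite -eq_l in_vline.
by rewrite in_sline -subr_eq0 addrAC subrr add0r oner_eq0.
Qed.

Lemma aline_cases a b c : (a, b) != (0, 0) ->
  (exists d, aline a b c = vline d) \/ (exists m b', aline a b c = sline m b').
Proof.
move=> ab_neq0; have [b0|bn0] := eqVneq b 0.
  have an0 : a != 0 by apply: contra ab_neq0 => /eqP a0; rewrite a0 b0.
  left; exists (c / a); apply/setP => p; rewrite in_vline inE b0 mul0r addr0.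
  by apply/eqP/eqP => [<-|->]; field.
right; exists (- a / b), (c / b); apply/setP => p; rewrite in_sline inE.
by apply/eqP/eqP => [<-|->]; field.
Qed.

Lemma vline_in_plane c : vline c \in field_plane F.
Proof. by apply/imsetP; exists (1, 0, c); rewrite // inE xpair_eqE oner_eq0. Qed.

Lemma sline_in_plane m b : sline m b \in field_plane F.
Proof.
by apply/imsetP; exists (- m, 1, b); rewrite // inE xpair_eqE oner_eq0 andbF.
Qed.

Lemma field_plane_cases l : l \in field_plane F ->
  (exists d, l = vline d) \/ (exists m b, l = sline m b).
Proof. by case/imsetP => -[[a b] c]; rewrite inE => ab_neq0 ->; apply: aline_cases. Qed.

Lemma card_vline c : #|vline c| = #|F|.
Proof.
have -> : vline c = [set (c, y) | y : F].
  apply/setP => -[x y]; rewrite in_vline /=.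
  by apply/eqP/imsetP => [->|[y' _ [-> _]]] //; exists y.
by rewrite card_imset ?cardsT // => y y' [].
Qed.

Lemma card_sline m b : #|sline m b| = #|F|.
Proof.
have -> : sline m b = [set (x, m * x + b) | x : F].
  apply/setP => -[x y]; rewrite in_sline /=.
  by apply/eqP/imsetP => [->|[x' _ [-> ->]]] //; exists x.
by rewrite card_imset ?cardsT // => x x' [].
Qed.

Lemma sline_graph m b p q :
  p \in sline m b -> q \in sline m b -> p.1 = q.1 -> p = q.
Proof.
case: p q => [x y] [x' y']; rewrite !in_sline /= => /eqP -> /eqP -> eq_x.
by rewrite eq_x.
Qed.

Lemma sline_through2 m b m' b' p q :
  p \in sline m b -> q \in sline m b -> p \in sline m' b' -> q \in sline m' b' ->
  p.1 != q.1 -> sline m b = sline m' b'.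
Proof.
rewrite !in_sline => /eqP pl /eqP ql /eqP pl' /eqP ql' nx.
have : (m - m') * (p.1 - q.1) = 0.
  transitivity ((m * p.1 + b - (m' * p.1 + b')) - (m * q.1 + b - (m' * q.1 + b'))).
    by ring.
  by rewrite -pl -ql -pl' -ql' !subrr.
move/eqP; rewrite mulf_eq0 !subr_eq0 (negbTE nx) orbF => /eqP eq_m; subst m'.
by rewrite pl in pl'; rewrite (addrI _ pl').
Qed.

Lemma line_through2 l l' p q : l \in field_plane F -> l' \in field_plane F ->
  p \in l -> q \in l -> p \in l' -> q \in l' -> p != q -> l = l'.
Proof.
move=> /field_plane_cases[[c ->]|[m [b ->]]] /field_plane_cases[[d ->]|[m' [b' ->]]].
- by rewrite !in_vline => /eqP <- _ /eqP <-.
- rewrite !in_vline => /eqP pc /eqP qc pl ql /eqP[]; apply: sline_graph pl ql _.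
  by rewrite pc qc.
- rewrite !in_vline => pl ql /eqP pd /eqP qd /eqP[]; apply: sline_graph pl ql _.
  by rewrite pd qd.
move=> pl ql pl' ql' npq; have [eq_x|nx] := eqVneq p.1 q.1.
  by case/eqP: npq; apply: sline_graph pl ql eq_x.
exact: sline_through2 pl ql pl' ql' nx.
Qed.

Lemma field_plane_linear : linear_hg (field_plane F).
Proof.
move=> l l' lA l'A nll'; apply/card_le1_eqP => p q /setIP[pl pl'] /setIP[ql ql'].
have [//|npq] := eqVneq p q.
by move: nll'; rewrite (line_through2 lA l'A pl ql pl' ql' npq) eqxx.
Qed.

Lemma vline_parallel c d : parallel (vline c) (vline d).
Proof.
rewrite /parallel; have [->|ncd] := eqVneq c d; first by rewrite eqxx.
apply/orP; right; rewrite -setI_eq0; apply/set0Pn => -[p].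
by rewrite inE !in_vline => /andP[/eqP pc /eqP pd]; rewrite -pc -pd eqxx in ncd.
Qed.

End FieldPlaneLines.

Section TrimmedPlane.
Variable F : finFieldType.
Local Open Scope ring_scope.
Local Notation k := #|F|.
Implicit Types (m b c : F) (p : F * F) (l : {set F * F}).

Definition deleted_vlines : {set {set F * F}} := [set vline c | c in [set~ 0]].
Definition slines : {set {set F * F}} := [set sline t.1 t.2 | t : F * F].
Definition Ahat : {set {set F * F}} := field_plane F :\: deleted_vlines.

Lemma deleted_vlines_sub : deleted_vlines \subset field_plane F.
Proof. by apply/subsetP => l /imsetP[c _ ->]; apply: vline_in_plane. Qed.

Lemma card_deleted_vlines : #|deleted_vlines| = k.-1.
Proof. by rewrite card_imset ?cardsC1 //; apply: vline_inj. Qed.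

Lemma deleted_vlines_parallel : {in deleted_vlines &, forall l l', parallel l l'}.
Proof. by move=> _ _ /imsetP[c _ ->] /imsetP[d _ ->]; apply: vline_parallel. Qed.

Lemma sline_in_slines m b : sline m b \in slines.
Proof. by apply/imsetP; exists (m, b). Qed.

Lemma vline_notin_slines c : vline c \notin slines.
Proof. by apply/imsetP => -[t _ /eqP]; rewrite (negbTE (vline_neq_sline _ _ _)). Qed.

Lemma card_slines : #|slines| = (k ^ 2)%N.
Proof.
rewrite card_imset ?cardsT ?card_prod ?mulnn // => -[m b] [m' b'].
by case/sline_inj => /= -> ->.
Qed.

Lemma Ahat_eq : Ahat = vline 0 |: slines.
Proof.
apply/setP => l; rewrite !inE; apply/andP/orP => [[nDl]|].
  case/field_plane_cases => [[c lc]|[m [b lb]]]; subst l; last first.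
    by right; apply: sline_in_slines.
  left; apply/eqP; congr vline; apply: contraNeq nDl => nc.
  by apply/imsetP; exists c; rewrite ?inE.
case=> [/eqP ->|/imsetP[t _ ->]]; split.
- by apply/imsetP => -[c]; rewrite in_setC1 => nc /vline_inj c0; rewrite c0 eqxx in nc.
- exact: vline_in_plane.
- by apply/imsetP => -[c _ /eqP]; rewrite eq_sym (negbTE (vline_neq_sline _ _ _)).
- exact: sline_in_plane.
Qed.

Lemma Ahat_cases l : l \in Ahat -> l = vline 0 \/ exists m b, l = sline m b.
Proof.
rewrite Ahat_eq => /setU1P[->|/imsetP[t _ ->]]; first by left.
by right; exists t.1, t.2.
Qed.

Lemma vline0_in_Ahat : vline 0 \in Ahat.
Proof. by rewrite Ahat_eq setU11. Qed.

Lemma vline_notin_Ahat c : c != 0 -> vline c \notin Ahat.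
Proof.
move=> nc; rewrite Ahat_eq; apply/setU1P => -[/vline_inj c0|].
  by rewrite c0 eqxx in nc.
by apply/negP; apply: vline_notin_slines.
Qed.

Lemma Ahat_vline0 : Ahat :\ vline 0 = slines.
Proof. by rewrite Ahat_eq setU1K // vline_notin_slines. Qed.

Lemma Ahat_linear : linear_hg Ahat.
Proof. exact: linear_hg_subset (subsetDl _ _) (@field_plane_linear F). Qed.

Lemma Ahat_uniform : uniform_hg k Ahat.
Proof. by move=> l /Ahat_cases[->|[m [b ->]]]; rewrite ?card_vline ?card_sline. Qed.

Lemma card_Ahat : #|Ahat| = (k ^ 2)%N.+1.
Proof. by rewrite Ahat_eq cardsU1 vline_notin_slines card_slines. Qed.

Lemma Ahat_extendable :
  exists f, [/\ f \notin Ahat, #|f| = k & linear_hg (f |: Ahat)].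
Proof.
exists (vline 1); split; [exact/vline_notin_Ahat/oner_neq0 | exact: card_vline |].
apply: linear_hg_subset _ (@field_plane_linear F).
by apply/subsetP => l /setU1P[->|/setDP[]//]; apply: vline_in_plane.
Qed.

Lemma slines_through p :
  [set l in slines | p \in l] = [set sline m (p.2 - m * p.1) | m : F].
Proof.
apply/setP => l; rewrite inE; apply/andP/imsetP => [[/imsetP[t _ ->] pl]|[m _ ->]].
  exists t.1 => //; rewrite in_sline in pl; rewrite (eqP pl).
  by congr sline; ring.
by split; [apply: sline_in_slines | rewrite in_sline; apply/eqP; ring].
Qed.

Lemma hdeg_slines p : hdeg slines p = k.
Proof.
by rewrite /hdeg slines_through card_imset ?cardsT // => m m' /sline_inj[].
Qed.

Lemma hdeg_Ahat p : hdeg Ahat p = ((p.1 == 0%R) + k)%N.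
Proof.
by rewrite (hdeg_setD1 _ (vline 0)) vline0_in_Ahat in_vline Ahat_vline0 hdeg_slines.
Qed.

Lemma hdeg_Ahat_vline0 p : p \in vline 0 -> hdeg Ahat p = k.+1.
Proof. by rewrite hdeg_Ahat in_vline => ->. Qed.

Lemma hdeg_Ahat_ge p : (k <= hdeg Ahat p)%N.
Proof. by rewrite hdeg_Ahat leq_addl. Qed.

Lemma Ahat_full_degree_edge l : l \in Ahat ->
  (forall p, p \in l -> hdeg Ahat p = k.+1) -> l = vline 0.
Proof.
case/Ahat_cases => [//|[m [b ->]]] full.
have := full (1, m + b); rewrite in_sline /= mulr1 eqxx hdeg_Ahat oner_eq0.
by move=> /(_ isT) /n_Sn.
Qed.

Definition slope l : F :=
  if [pick t : F * F | l == sline t.1 t.2] is Some t then t.1 else 0.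

Lemma slope_sline m b : slope (sline m b) = m.
Proof.
rewrite /slope; case: pickP => [t /eqP/sline_inj[] //|no_t].
by have := no_t (m, b); rewrite eqxx.
Qed.

Lemma sline_meet_slope m b m' b' : sline m b != sline m' b' ->
  sline m b :&: sline m' b' != set0 -> m != m'.
Proof.
move=> nll' /set0Pn[p /setIP[]]; rewrite !in_sline => /eqP pl /eqP pl'.
apply: contraNneq nll' => eq_m; subst m'.
by rewrite pl in pl'; rewrite (addrI _ pl').
Qed.

Lemma colorable_slines : colorable slines k.
Proof.
apply/colorableP; exists (fun l => enum_rank (slope l)).
move=> _ _ /imsetP[t _ ->] /imsetP[t' _ ->] nll' meet.
by rewrite (inj_eq enum_rank_inj) !slope_sline; apply: sline_meet_slope nll' meet.
Qed.

Lemma colorable_Ahat : colorable Ahat k.+1.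
Proof.
by apply: (colorable_setD1 (e := vline 0)); rewrite Ahat_vline0 colorable_slines.
Qed.

Lemma chromatic_index_Ahat : chromatic_index Ahat = k.+1.
Proof.
apply: (chromatic_index_eq (x := (0, 0))) colorable_Ahat _.
by rewrite hdeg_Ahat eqxx.
Qed.

Lemma chromatic_index_Ahat_vline0 : chromatic_index (Ahat :\ vline 0) = k.
Proof.
rewrite Ahat_vline0.
exact: (chromatic_index_eq (x := (0, 0))) colorable_slines (hdeg_slines _).
Qed.

Lemma chromatic_index_Ahat_sline m b : chromatic_index (Ahat :\ sline m b) = k.+1.
Proof.
apply: (chromatic_index_eq (x := (0, b + 1))).
  exact: colorable_subset (subD1set _ _) colorable_Ahat.
have b_neq : (b + 1 == b) = false.
  by rewrite -subr_eq0 addrAC subrr add0r oner_eq0.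
have := hdeg_setD1 Ahat (sline m b) (0, b + 1).
by rewrite hdeg_Ahat in_sline /= mulr0 add0r b_neq andbF eqxx.
Qed.

Lemma critical_Ahat l : critical Ahat l <-> l = vline 0.
Proof.
split=> [[/Ahat_cases[//|[m [b ->]]]]|->].
  by rewrite chromatic_index_Ahat_sline chromatic_index_Ahat => /esym /n_Sn.
split; first exact: vline0_in_Ahat.
by rewrite chromatic_index_Ahat_vline0 chromatic_index_Ahat.
Qed.

End TrimmedPlane.

Theorem proposition4p2 (k : nat) (hk : prime_power k) :
  exists F : finFieldType, #|F| = k /\
  exists D : {set {set F * F}},
    [/\ D \subset field_plane F, #|D| = k.-1,
        {in D &, forall l m, parallel l m} &
    let E := field_plane F :\: D in
    [/\ linear_hg E, uniform_hg k E, #|[set: F * F]| = (k ^ 2)%N, #|E| = (k ^ 2).+1 &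
    exists e0,
      let P := fun e => [/\ e \in E,
                         (forall x, x \in e -> hdeg E x = k.+1) &
                         (forall x, x \notin e -> (k <= hdeg E x)%N)] in
      [/\ P e0, (forall e, P e -> e = e0),
          chromatic_index E = k.+1,
          (exists f : {set F * F}, [/\ f \notin E, #|f| = k & linear_hg (f |: E)]) &
          (forall e, critical E e <-> e = e0)]]].
Proof.
case: hk => p [n [p_prime [n_gt0 ->]]].
have [F _ cardF] := pPrimePowerField p_prime n_gt0.
exists F; split; first exact: cardF.
rewrite -cardF; exists (deleted_vlines F); split.
- exact: deleted_vlines_sub.
- exact: card_deleted_vlines.
- exact: deleted_vlines_parallel.
rewrite -/(Ahat F); split.
- exact: Ahat_linear.
- exact: Ahat_uniform.
- by rewrite cardsT card_prod mulnn.
- exact: card_Ahat.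
exists (vline 0%R); split.
- split=> [|x|x _]; first exact: vline0_in_Ahat.
  + exact: hdeg_Ahat_vline0.
  + exact: hdeg_Ahat_ge.
- by move=> e [eA full _]; apply: Ahat_full_degree_edge.
- exact: chromatic_index_Ahat.
- exact: Ahat_extendable.
- exact: critical_Ahat.
Qed.
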